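(* Let $\rho_n^{AB}$ be a state on $\mathcal{H}_A^{(n)}\otimes\mathcal{H}_B^{(n)}$ with $\dim\mathcal{H}_A^{(n)}=d^n$, and let $\rho_n^B$ be its reduced state on $B$. Let $\mathcal{E}^A_{n,1},\dots,\mathcal{E}^A_{n,M}$ be CPTP maps on $\mathcal{B}(\mathcal{H}_A^{(n)})$, let $\rho^{AB}_{n,i}=(\mathcal{E}^A_{n,i}\otimes\mathrm{id}^B)\rho_n^{AB}$, and let $E^{AB}_{n,1},\dots,E^{AB}_{n,M}\ge0$ with $\sum_iE^{AB}_{n,i}\le I$. Then for every real $\gamma$, the average error probability $P_e=\frac1M\sum_{i=1}^M(1-\mathrm{Tr}(\rho^{AB}_{n,i}E^{AB}_{n,i}))$ satisfies \[ P_e\ge 1-\max_i\mathrm{Tr}\Big[\{\rho^{AB}_{n,i}\ge e^{-n\gamma}I^A_n\otimes\rho^B_n\}\big(\rho^{AB}_{n,i}-e^{-n\gamma}I^A_n\otimes\rho^B_n\big)\Big]-\frac{e^{n(\log d-\gamma)}}{M}. \]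
   Context: Logarithms are natural. For self-adjoint $A=\sum_i\lambda_i|i\rangle\langle i|$, $\{A\ge0\}:=\sum_{\lambda_i\ge0}|i\rangle\langle i|$ and $\{A\ge B\}:=\{A-B\ge0\}$. $I^A_n$ denotes the identity on $\mathcal{H}_A^{(n)}$. *)

From HB Require Import structures.
From mathcomp Require Import all_boot all_order all_algebra.
From mathcomp Require Import complex mxtens.
From mathcomp Require Import reals sequences exp.

Set Implicit Arguments.
Unset Strict Implicit.
Unset Printing Implicit Defensive.

Import Order.TTheory GRing.Theory Num.Theory.
Local Open Scope ring_scope.

Section QDefs.
Variable R : realType.
Local Notation C := (R[i]).

Definition mxadj m n (A : 'M[C]_(m, n)) : 'M[C]_(n, m) := (map_mx Num.conj A)^T.

Definition psd n (A : 'M[C]_n) : Prop :=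
  A \is hermsymmx /\ forall v : 'cV[C]_n, 0 <= (mxadj v *m A *m v) 0 0.

Definition mxle n (A B : 'M[C]_n) : Prop := psd (B - A).

Definition density n (rho : 'M[C]_n) : Prop := psd rho /\ \tr rho = 1.

(* Indices of H_A (x) H_B: (a,b) |-> mxtens_index (a,b), consistent with tensmx. *)
Definition ket dA dB (a : 'I_dA) (b : 'I_dB) : 'I_(dA * dB) := mxtens_index (a, b).

Definition ptraceA dA dB (X : 'M[C]_(dA * dB)) : 'M[C]_dB :=
  \matrix_(b, b') \sum_(a < dA) X (ket a b) (ket a b').

Definition blockA dA dB (X : 'M[C]_(dA * dB)) (b b' : 'I_dB) : 'M[C]_dA :=
  \matrix_(a, a') X (ket a b) (ket a' b').

(* (E (x) id_B) X, for a (linear) map E on B(H_A) *)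
Definition applyA dA dB (E : 'M[C]_dA -> 'M[C]_dA) (X : 'M[C]_(dA * dB))
  : 'M[C]_(dA * dB) :=
  \matrix_(i, j) E (blockA X (mxtens_unindex i).2 (mxtens_unindex j).2)
                   (mxtens_unindex i).1 (mxtens_unindex j).1.

Definition is_linear_map dA (E : 'M[C]_dA -> 'M[C]_dA) : Prop :=
  forall (c : C) (X Y : 'M[C]_dA), E (c *: X + Y) = c *: E X + E Y.

Definition completely_positive dA (E : 'M[C]_dA -> 'M[C]_dA) : Prop :=
  forall (k : nat) (X : 'M[C]_(dA * k)), psd X -> psd (applyA E X).

Definition trace_preserving dA (E : 'M[C]_dA -> 'M[C]_dA) : Prop :=
  forall X : 'M[C]_dA, \tr (E X) = \tr X.

Definition CPTP dA (E : 'M[C]_dA -> 'M[C]_dA) : Prop :=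
  [/\ is_linear_map E, completely_positive E & trace_preserving E].

(* {A >= 0}: for A = sum_i lambda_i |i><i| (spectral decomposition
   A = U^-1 diag(lambda) U with U unitary), the projector sum_{lambda_i >= 0} |i><i| *)
Definition posproj n (A : 'M[C]_n) : 'M[C]_n :=
  invmx (spectralmx A)
  *m diag_mx (\row_i (if 0 <= spectral_diag A 0 i then 1 else 0))
  *m spectralmx A.

Definition geproj n (A B : 'M[C]_n) : 'M[C]_n := posproj (A - B).

Definition maxI M (hM : (0 < M)%N) (f : 'I_M -> R) : R :=
  \big[Num.max/f (Ordinal hM)]_(i < M) f i.

End QDefs.

From HB Require Import structures.
From mathcomp Require Import all_boot all_order all_algebra.
From mathcomp Require Import complex mxtens.
From mathcomp Require Import reals sequences exp.
From mathcomp Require Import lra.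

(* Write rho_i = (rho_i - sigma) + sigma.  For Hermitian A and 0 <= E <= I one has
   tr (A E) <= tr ({A >= 0} A), as is seen by diagonalising A; hence
   tr (rho_i E_i) <= max_j tr ({rho_j >= sigma} (rho_j - sigma)) + tr (sigma E_i).
   Summing over i and using sum_i E_i <= I bounds the total by
   M max_j (...) + tr sigma, and tr sigma = e^(-n gamma) tr (I_A (x) rho_B) = e^(n (log d - gamma)). *)

Set Implicit Arguments.
Unset Strict Implicit.
Unset Printing Implicit Defensive.

Import Order.TTheory GRing.Theory Num.Theory.
Local Open Scope ring_scope.

Section PositiveSemidefinite.
Variable R : realType.
Local Notation C := (R[i]).

Lemma hermitianmxE n (A : 'M[C]_n) :
  A \is hermsymmx <-> forall i j, A i j = Num.conj (A j i).
Proof.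
split=> [/is_hermitianmxP hA i j | hA].
  by rewrite {1}hA !mxE /= expr0 mul1r.
by apply/is_hermitianmxP/matrixP => i j; rewrite !mxE expr0 mul1r.
Qed.

Lemma mxadjM m n p (A : 'M[C]_(m, n)) (B : 'M[C]_(n, p)) :
  mxadj (A *m B) = mxadj B *m mxadj A.
Proof. by rewrite /mxadj map_mxM trmx_mul. Qed.

Lemma sesqui_mxadjE m n (A : 'M[C]_(m, n)) : (A ^t*)%sesqui = mxadj A.
Proof. by rewrite /mxadj map_trmx. Qed.

Lemma mxadjK m n (A : 'M[C]_(m, n)) : mxadj (mxadj A) = A.
Proof. by apply/matrixP => i j; rewrite !mxE conjCK. Qed.

Lemma qformE n (X : 'M[C]_n) (v : 'cV[C]_n) :
  (mxadj v *m X *m v) 0 0 = \sum_i \sum_j Num.conj (v i 0) * X i j * v j 0.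
Proof.
rewrite mxE; under eq_bigr => j _ do rewrite mxE mulr_suml.
rewrite exchange_big /=; apply: eq_bigr => i _; apply: eq_bigr => j _.
by rewrite !mxE.
Qed.

Lemma sum_only m (i : 'I_m) (F : 'I_m -> C) :
  (forall j, j != i -> F j = 0) -> \sum_(j < m) F j = F i.
Proof. by move=> F0; rewrite (bigD1 i) //= big1 ?addr0 // => j /F0. Qed.

Lemma hermitianmxB n (A B : 'M[C]_n) :
  A \is hermsymmx -> B \is hermsymmx -> A - B \is hermsymmx.
Proof.
move=> /hermitianmxE hA /hermitianmxE hB.
by apply/hermitianmxE => i j; rewrite !mxE rmorphB hA hB.
Qed.

Lemma psd_hermitian n (A : 'M[C]_n) : psd A -> A \is hermsymmx.
Proof. by case. Qed.

Lemma psd0 n : psd (0 : 'M[C]_n).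
Proof.
split; first by apply/hermitianmxE => i j; rewrite !mxE rmorph0.
by move=> v; rewrite mulmx0 mul0mx mxE.
Qed.

Lemma psdD n (A B : 'M[C]_n) : psd A -> psd B -> psd (A + B).
Proof.
move=> [/hermitianmxE hA qA] [/hermitianmxE hB qB]; split.
  by apply/hermitianmxE => i j; rewrite !mxE rmorphD hA hB.
by move=> v; rewrite mulmxDr mulmxDl mxE addr_ge0.
Qed.

Lemma psd_sum n (I : finType) (P : pred I) (F : I -> 'M[C]_n) :
  (forall i, P i -> psd (F i)) -> psd (\sum_(i | P i) F i).
Proof. by move=> psdF; apply: big_ind => //; [exact: psd0 | exact: psdD]. Qed.

Lemma psdZ n (c : R) (A : 'M[C]_n) : 0 <= c -> psd A -> psd ((c%:C)%C *: A).
Proof.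
move=> c_ge0 [/hermitianmxE hA qA]; split.
  apply/hermitianmxE => i j; rewrite !mxE rmorphM hA; congr (_ * _).
  by apply/eqP; rewrite eq_complex /= eqxx oppr0 eqxx.
by move=> v; rewrite -scalemxAr -scalemxAl mxE mulr_ge0 // ler0c.
Qed.

Lemma psd_congr m n (W : 'M[C]_(m, n)) (X : 'M[C]_m) :
  psd X -> psd (mxadj W *m X *m W).
Proof.
move=> [/is_hermitianmxP hX qX]; split.
  rewrite expr0 scale1r sesqui_mxadjE in hX.
  apply/is_hermitianmxP; rewrite expr0 scale1r sesqui_mxadjE.
  by rewrite !mxadjM mxadjK mulmxA -hX.
by move=> v; rewrite -!mulmxA mulmxA -mxadjM mulmxA.
Qed.

Lemma psd_diag_ge0 n (A : 'M[C]_n) k : psd A -> 0 <= A k k.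
Proof.
case=> _ /(_ (delta_mx k 0)); rewrite qformE (sum_only (i := k)) => [|i ik].
  rewrite (sum_only (i := k)) => [|j jk]; rewrite !mxE ?eqxx ?rmorph1 ?mul1r ?mulr1 //.
  by rewrite (negbTE jk) mulr0.
by apply: big1 => j _; rewrite !mxE (negbTE ik) rmorph0 !mul0r.
Qed.

Lemma unitarymx_mulmx_adj n (U : 'M[C]_n) :
  U \is unitarymx -> U *m mxadj U = 1%:M.
Proof. by rewrite -sesqui_mxadjE => /unitarymxP. Qed.

Lemma invmx_spectralmx n (A : 'M[C]_n) : invmx (spectralmx A) = mxadj (spectralmx A).
Proof. by rewrite invmx_unitary ?spectral_unitarymx // sesqui_mxadjE. Qed.

Lemma spectral_decomposition n (A : 'M[C]_n) : A \is hermsymmx ->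
  A = mxadj (spectralmx A) *m diag_mx (spectral_diag A) *m spectralmx A.
Proof.
move=> /hermitian_normalmx /orthomx_spectralP.
by rewrite invmx_spectralmx.
Qed.

Lemma spectralmx_diagonalize n (A : 'M[C]_n) : A \is hermsymmx ->
  spectralmx A *m A *m mxadj (spectralmx A) = diag_mx (spectral_diag A).
Proof.
move=> hA; have U1 := unitarymx_mulmx_adj (spectral_unitarymx A).
by rewrite {2}(spectral_decomposition hA) !mulmxA U1 mul1mx -mulmxA U1 mulmx1.
Qed.

Lemma mxtrace_conj_diag n (U Y : 'M[C]_n) (s : 'rV[C]_n) :
  \tr (mxadj U *m diag_mx s *m U *m Y) = \sum_k s 0 k * (U *m Y *m mxadj U) k k.
Proof.
rewrite -!mulmxA mxtrace_mulC -mulmxA /mxtrace.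
by apply: eq_bigr => k _; rewrite mul_diag_mx mxE mulmxA.
Qed.

Lemma psd_conj_diag_ge0 n (U Y : 'M[C]_n) k : psd Y -> 0 <= (U *m Y *m mxadj U) k k.
Proof. by move=> psdY; rewrite -{1}[U]mxadjK; apply/psd_diag_ge0/psd_congr. Qed.

Lemma psd_spectral_diag_ge0 n (A : 'M[C]_n) k : psd A -> 0 <= spectral_diag A 0 k.
Proof.
move=> psdA; have := psd_conj_diag_ge0 (spectralmx A) k psdA.
by rewrite spectralmx_diagonalize ?psd_hermitian // mxE eqxx mulr1n.
Qed.

Lemma psd_mxtrace_mulmx_ge0 n (X Y : 'M[C]_n) : psd X -> psd Y -> 0 <= \tr (X *m Y).
Proof.
move=> psdX psdY; rewrite {1}(spectral_decomposition (psd_hermitian psdX)).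
rewrite mxtrace_conj_diag; apply: sumr_ge0 => k _; apply: mulr_ge0.
  exact: psd_spectral_diag_ge0.
exact: psd_conj_diag_ge0.
Qed.

Lemma Re_le (x y : C) : x <= y -> complex.Re x <= complex.Re y.
Proof. by rewrite lecE => /andP[]. Qed.

Lemma Re_realM (c : R) (z : C) : complex.Re ((c%:C)%C * z) = c * complex.Re z.
Proof. by case: z => a b /=; rewrite mul0r subr0. Qed.

Lemma mulr_le_pos_part (l e : C) : l \is Num.real -> 0 <= e <= 1 ->
  l * e <= (if 0 <= l then 1 else 0) * l.
Proof.
move=> l_real /andP[e_ge0 e_le1]; case: ifP => [l_ge0 | l_lt0].
  by rewrite mul1r ler_piMr.
rewrite mul0r mulr_le0_ge0 // ltW // real_ltNge ?l_lt0 ?real0 //.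
Qed.

Lemma Re_mxtrace_mulmx_le_posproj n (A E : 'M[C]_n) :
  A \is hermsymmx -> psd E -> mxle E 1%:M ->
  complex.Re (\tr (A *m E)) <= complex.Re (\tr (posproj A *m A)).
Proof.
(* In the eigenbasis of A: tr (A E) = sum_k l_k e_k with 0 <= e_k <= 1. *)
move=> hA psdE leE1; apply: Re_le.
set U := spectralmx A; have UU := unitarymx_mulmx_adj (spectral_unitarymx A).
rewrite /posproj invmx_spectralmx mxtrace_conj_diag spectralmx_diagonalize //.
rewrite {1}(spectral_decomposition hA) mxtrace_conj_diag; apply: ler_sum => k _.
have e_le1 : (U *m E *m mxadj U) k k <= 1.
  have := psd_conj_diag_ge0 U k leE1.
  by rewrite mulmxBr mulmxBl mulmx1 UU !mxE eqxx mulr1n subr_ge0.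
have e_ge0 := psd_conj_diag_ge0 U k psdE.
move: e_ge0 e_le1; set e := (U *m E *m _) k k => e_ge0 e_le1.
rewrite !mxE eqxx mulr1n mulr_le_pos_part ?e_ge0 //.
by move/hermitian_spectral_diag_real/mxOverP: hA; apply.
Qed.

End PositiveSemidefinite.

Section PartialTrace.
Variable R : realType.
Local Notation C := (R[i]).
Variables dA dB : nat.

Lemma sum_mxtens (F : 'I_(dA * dB) -> C) :
  \sum_k F k = \sum_(a < dA) \sum_(b < dB) F (ket a b).
Proof.
rewrite pair_bigA (reindex (@mxtens_unindex dA dB)).
  by apply: eq_bigr => k _; rewrite /ket -surjective_pairing mxtens_unindexK.
by exists (@mxtens_index dA dB) => k _; rewrite ?mxtens_unindexK ?mxtens_indexK.
Qed.

Lemma mxtrace_tens1_ptraceA (X : 'M[C]_(dA * dB)) :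
  \tr ((1%:M : 'M[C]_dA) *t ptraceA X) = dA%:R * \tr X.
Proof.
rewrite /mxtrace sum_mxtens.
under eq_bigr => a _ do under eq_bigr => b _ do rewrite tensmxE mxE eqxx mul1r.
rewrite sumr_const card_ord mulr_natl sum_mxtens exchange_big /=.
by congr (_ *+ _); apply: eq_bigr => b _; rewrite mxE.
Qed.

(* [moveA a x v] is [(|x><a| (x) I) v]. *)
Definition moveA (a x : 'I_dA) (v : 'cV[C]_(dA * dB)) : 'cV[C]_(dA * dB) :=
  \col_k (((mxtens_unindex k).1 == x)%:R * v (ket a (mxtens_unindex k).2) 0).

Lemma qform_moveA (X : 'M[C]_(dA * dB)) (v : 'cV[C]_(dA * dB)) (a x : 'I_dA) :
  (mxadj (moveA a x v) *m X *m moveA a x v) 0 0 = \sum_(b < dB) \sum_(b' < dB)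
     Num.conj (v (ket a b) 0) * X (ket x b) (ket x b') * v (ket a b') 0.
Proof.
rewrite qformE sum_mxtens (sum_only (i := x)) => [|y yx].
  apply: eq_bigr => b _; rewrite sum_mxtens (sum_only (i := x)) => [|y yx].
    by apply: eq_bigr => b' _; rewrite !mxE !mxtens_indexK /= eqxx !mul1r.
  by apply: big1 => b' _; rewrite !mxE !mxtens_indexK /= (negbTE yx) mul0r mulr0.
apply: big1 => b _; apply: big1 => l _.
by rewrite !mxE mxtens_indexK /= (negbTE yx) mul0r rmorph0 !mul0r.
Qed.

Lemma psd_tens1_ptraceA (X : 'M[C]_(dA * dB)) :
  psd X -> psd ((1%:M : 'M[C]_dA) *t ptraceA X).
Proof.
move=> psdX; have [/hermitianmxE hX qX] := psdX; split.
  apply/hermitianmxE => i j; rewrite !mxE rmorphM rmorph_sum /=; congr (_ * _).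
    by rewrite eq_sym; case: (_ == _); rewrite ?rmorph1 ?rmorph0.
  by apply: eq_bigr => a _; rewrite hX.
move=> v; rewrite qformE sum_mxtens.
rewrite (eq_bigr (fun a => \sum_x (mxadj (moveA a x v) *m X *m moveA a x v) 0 0)).
  by apply: sumr_ge0 => a _; apply: sumr_ge0 => x _; apply: qX.
move=> a _; under [RHS]eq_bigr => x _ do rewrite qform_moveA.
rewrite [RHS]exchange_big /=; apply: eq_bigr => b _.
rewrite sum_mxtens (sum_only (i := a)) => [|y ya].
  rewrite [RHS]exchange_big /=; apply: eq_bigr => b' _.
  rewrite !mxE !mxtens_indexK /= eqxx mul1r mulr_sumr mulr_suml.
  by apply: eq_bigr => x _; rewrite ?mxE.
apply: big1 => b' _.
by rewrite !mxE !mxtens_indexK /= eq_sym (negbTE ya) !mul0r mulr0 mul0r.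
Qed.

End PartialTrace.

Section OneShotConverse.
Variable R : realType.
Local Notation C := (R[i]).

Lemma mxle_summand n (I : finType) (F : I -> 'M[C]_n) (B : 'M[C]_n) i :
  (forall j, psd (F j)) -> mxle (\sum_j F j) B -> mxle (F i) B.
Proof.
move=> psdF; rewrite /mxle (bigD1 i) //= => leFB.
have -> : B - F i = (B - (F i + \sum_(j | j != i) F j)) + \sum_(j | j != i) F j.
  by rewrite opprD addrA subrK.
exact: psdD leFB (psd_sum _).
Qed.

Lemma Re_mxtrace_mulmx_le n (S F : 'M[C]_n) :
  psd S -> mxle F 1%:M -> complex.Re (\tr (S *m F)) <= complex.Re (\tr S).
Proof.
move=> psdS leF1; have := psd_mxtrace_mulmx_ge0 psdS leF1.
by rewrite mulmxBr mulmx1 linearB subr_ge0 => /Re_le.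
Qed.

Lemma sum_success_le M (hM : (0 < M)%N) n (rho : 'I_M -> 'M[C]_n) (S : 'M[C]_n)
    (E : 'I_M -> 'M[C]_n) :
  (forall i, rho i \is hermsymmx) -> psd S -> (forall i, psd (E i)) ->
  mxle (\sum_i E i) 1%:M ->
  \sum_i complex.Re (\tr (rho i *m E i)) <=
    M%:R * maxI hM (fun i => complex.Re (\tr (geproj (rho i) S *m (rho i - S))))
    + complex.Re (\tr S).
Proof.
move=> hrho psdS psdE leE1.
set f := fun i => complex.Re (\tr (geproj (rho i) S *m (rho i - S))).
have leEi1 i : mxle (E i) 1%:M by exact: mxle_summand.
apply: (@le_trans _ _ (\sum_i (maxI hM f + complex.Re (\tr (S *m E i))))).
  apply: ler_sum => i _; rewrite -{1}[rho i](subrK S) mulmxDl mxtraceD raddfD /=.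
  rewrite lerD2r; apply: le_trans (le_bigmax _ _ i).
  apply: Re_mxtrace_mulmx_le_posproj (psdE i) (leEi1 i).
  by rewrite hermitianmxB // psd_hermitian.
rewrite big_split /= sumr_const card_ord mulr_natl lerD2l.
by rewrite -raddf_sum -linear_sum -mulmx_sumr; apply: Re_mxtrace_mulmx_le.
Qed.

End OneShotConverse.

Theorem mainTheorem8 (R : realType) (d n dB M : nat)
  (hd : (0 < d)%N) (hM : (0 < M)%N)
  (rho : 'M[R[i]]_((d ^ n)%N * dB))
  (Ech : 'I_M -> 'M[R[i]]_(d ^ n) -> 'M[R[i]]_(d ^ n))
  (Epovm : 'I_M -> 'M[R[i]]_((d ^ n)%N * dB))
  (gamma : R) :
  density rho ->
  (forall i, CPTP (Ech i)) ->
  (forall i, psd (Epovm i)) ->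
  mxle (\sum_(i < M) Epovm i) 1%:M ->
  let rhoB := ptraceA rho in
  let rho_i := fun i => applyA (Ech i) rho in
  let c := expR (- (n%:R * gamma)) in
  let sigma := (c%:C)%C *: (1%:M *t rhoB) in
  let Pe := M%:R^-1 * \sum_(i < M) (1 - complex.Re (\tr (rho_i i *m Epovm i))) in
  1 - maxI hM (fun i => complex.Re (\tr (geproj (rho_i i) sigma *m (rho_i i - sigma))))
    - expR (n%:R * (ln (d%:R) - gamma)) / M%:R <= Pe.
Proof.
move=> [psd_rho tr_rho] cptp psdE leE1; cbv zeta.
set rho_i := fun i => applyA (Ech i) rho.
set sigma := (_%:C)%C *: _.
have psd_rho_i i : psd (rho_i i) by case: (cptp i) => _ cp _; exact: cp.
have psd_sigma : psd sigma.
  by apply: psdZ; [exact: expR_ge0 | exact: psd_tens1_ptraceA].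
have tr_sigma : complex.Re (\tr sigma) = expR (n%:R * (ln d%:R - gamma)).
  rewrite mxtraceZ mxtrace_tens1_ptraceA tr_rho mulr1 Re_realM raddfMn /=.
  by rewrite mulrBr expRD expRM_natl lnK ?posrE ?ltr0n // natrX mulrC.
have := sum_success_le hM (fun i => psd_hermitian (psd_rho_i i)) psd_sigma psdE leE1.
rewrite tr_sigma; set S := \sum_i _; set m := maxI hM _; set K := expR _ => le_S.
have M_gt0 : (0 : R) < M%:R by rewrite ltr0n.
have -> : M%:R^-1 * \sum_i (1 - complex.Re (\tr (rho_i i *m Epovm i))) = 1 - S / M%:R.
  by rewrite sumrB sumr_const card_ord mulrBr mulVf ?gt_eqF // mulrC.
have : S / M%:R <= m + K / M%:R.
  by rewrite -(mulfK (lt0r_neq0 M_gt0) m) -mulrDl ler_pM2r ?invr_gt0 // (mulrC m).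
lra.
Qed.
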